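(* Let $G$ be an abelian group and $B=\bigoplus_{g\in G}B_g$ a $G$-graded integral domain of characteristic zero. Let $D\in \mathrm{HLND}(B)\setminus\{0\}$, let $A=\ker D$, and suppose that $G(A)=G(B)$. Then: (a) $\mathrm{HFrac}(B)=(\mathrm{HFrac}(A))^{(1)}$, i.e. $\mathrm{HFrac}(B)$ is a purely transcendental extension of $\mathrm{HFrac}(A)$ of transcendence degree $1$. (b) If $\mathbf{k}$ is a field included in $B$, then $\mathbf{k}\cap B_0$ is a field included in $\mathrm{HFrac}(A)$. (c) If $G$ is torsion-free and $\mathbf{k}$ is a field included in $B$, then $\mathbf{k}\subseteq \mathrm{HFrac}(A)$ and consequently $\mathrm{HFrac}(B)$ is ruled over $\mathbf{k}$.
   Context: A $G$-grading of a ring $B$ is a family of additive subgroups $\{B_g\}_{g\in G}$ with $B=\bigoplus_g B_g$ and $B_gB_h\subseteq B_{g+h}$. A derivation $D:B\to B$ is locally nilpotent if for each $b\in B$ some power $D^n(b)=0$; it is homogeneous if there is $h\in G$ with $D(B_g)\subseteq B_{g+h}$ for all $g$. $\mathrm{HLND}(B)$ denotes the set of homogeneous locally nilpotent derivations of $B$. For $D\in\mathrm{HLND}(B)$, $A=\ker D$ is a graded subring, i.e. $A=\bigoplus_g (A\cap B_g)$; write $A_g=A\cap B_g$. For a graded subring $A$ of $B$, $G(A)$ is the subgroup of $G$ generated by $\{g\in G: A_g\neq 0\}$. For a $G$-graded domain $B$, $\mathrm{HFrac}(B)$ (the homogeneous field of fractions) is the subfield of $\mathrm{Frac}(B)$ consisting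 of all fractions $b/s$ with $b\in B_i$, $s\in B_i\setminus\{0\}$ for some $i\in G$; for the graded subring $A$, $\mathrm{HFrac}(A)\subseteq\mathrm{HFrac}(B)$ is defined analogously. A field extension $L/\mathbf{k}$ is ruled if there is a field $K$ with $\mathbf{k}\subseteq K\subseteq L$ and $L=K^{(1)}$ (purely transcendental of transcendence degree $1$ over $K$). *)

From HB Require Import structures.
From mathcomp Require Import all_boot all_order all_algebra.
Set Implicit Arguments. Unset Strict Implicit. Unset Printing Implicit Defensive.
Import Order.TTheory GRing.Theory Num.Theory.
Local Open Scope ring_scope.

Definition is_grading (G : zmodType) (B : pzRingType) (Bg : G -> B -> Prop) : Prop :=
  [/\ (forall g, Bg g 0 /\ forall x y, Bg g x -> Bg g y -> Bg g (x - y)),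
      (forall g h x y, Bg g x -> Bg h y -> Bg (g + h) (x * y)),
      (forall b : B, exists (s : seq G) (f : G -> B),
          [/\ uniq s, forall g, Bg g (f g) & b = \sum_(g <- s) f g]) &
      (forall (s : seq G) (f : G -> B), uniq s -> (forall g, Bg g (f g)) ->
          \sum_(g <- s) f g = 0 -> forall g, g \in s -> f g = 0)].

Definition is_derivation (B : pzRingType) (D : B -> B) : Prop :=
  (forall x y, D (x + y) = D x + D y) /\ (forall x y, D (x * y) = D x * y + x * D y).

Definition locally_nilpotent (B : pzRingType) (D : B -> B) : Prop :=
  forall b, exists n, iter n D b = 0.

Definition homogeneous_map (G : zmodType) (B : pzRingType) (Bg : G -> B -> Prop)
    (D : B -> B) : Prop :=
  exists h : G, forall g b, Bg g b -> Bg (g + h) (D b).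

Definition is_HLND (G : zmodType) (B : pzRingType) (Bg : G -> B -> Prop)
    (D : B -> B) : Prop :=
  [/\ is_derivation D, locally_nilpotent D & homogeneous_map Bg D].

Definition gen_subgroup (G : zmodType) (S : G -> Prop) : G -> Prop :=
  fun g => forall H : G -> Prop,
    H 0 -> (forall x y, H x -> H y -> H (x - y)) -> (forall x, S x -> H x) -> H g.

(* G(A) for a graded subring A (given as a predicate on B), with A_g = A \cap B_g *)
Definition degree_group (G : zmodType) (B : pzRingType) (Bg : G -> B -> Prop)
    (A : B -> Prop) : G -> Prop :=
  gen_subgroup (fun g => exists b, [/\ A b, Bg g b & b <> 0]).

Definition HFrac (G : zmodType) (B : idomainType) (Bg : G -> B -> Prop)
    (A : B -> Prop) : {fraction B} -> Prop :=
  fun x => exists (i : G) (b s : B),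
    [/\ A b /\ A s, Bg i b, Bg i s, s <> 0 & x = (FracField.tofrac b) / (FracField.tofrac s)].

Definition is_subfield (R : pzRingType) (K : R -> Prop) : Prop :=
  [/\ K 1, (forall x y, K x -> K y -> K (x - y)),
      (forall x y, K x -> K y -> K (x * y)) &
      (forall x, K x -> x <> 0 -> exists2 y, K y & x * y = 1)].

Definition pure_trdeg1 (F : fieldType) (K L : F -> Prop) : Prop :=
  [/\ is_subfield K, is_subfield L, (forall x, K x -> L x) &
      exists t, [/\ L t,
        (forall p : {poly F}, (forall i, K p`_i) -> p != 0 -> p.[t] != 0) &
        (forall x, L x <-> exists p q : {poly F},
            [/\ forall i, K p`_i, forall i, K q`_i, q.[t] != 0 & x = p.[t] / q.[t]])]].

Definition ruled (F : fieldType) (k L : F -> Prop) : Prop :=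
  exists K : F -> Prop, [/\ forall x, k x -> K x, forall x, K x -> L x & pure_trdeg1 K L].

Definition torsion_free (G : zmodType) : Prop :=
  forall (n : nat) (g : G), (0 < n)%N -> g *+ n = 0 -> g = 0.

(* Take a homogeneous local slice [r] of [D] ([D r != 0], [D^2 r = 0]), of
   degree [d].  Because [G(A) = G(B)], [d] is the difference of the degrees of
   two nonzero homogeneous kernel elements [a1] and [a2], so [t = r a2 / a1] is
   a degree-0 element of [HFrac(B)].  By induction on the nilpotency order,
   every homogeneous [b] satisfies [c b = P(r)] with [0 != c] in [A] and [P] in
   [A[X]]; dividing by suitable kernel elements of the right degrees expresses
   every element of [HFrac(B)] as a rational function of [t] over [HFrac(A)].
   In characteristic 0, [D^(deg P)] shows that [r], hence [t], is
   transcendental over [A].  The same expansion shows that homogeneous units lie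
   in [A], which gives (b).  For (c), when [G] is torsion-free the finitely
   many degrees involved carry a rational-valued weight that is injective and
   additive on them; comparing top and bottom terms shows that units of [B] are
   homogeneous, and for [x] in a field [k] both [x] and [x + 1] are homogeneous
   units, which forces [x] into degree 0. *)

From HB Require Import structures.
From mathcomp Require Import all_boot all_order all_algebra.
From Stdlib Require Import Classical.
From mathcomp Require Import ring lra zify.
Set Implicit Arguments. Unset Strict Implicit. Unset Printing Implicit Defensive.
Import Order.TTheory GRing.Theory Num.Theory.
Local Open Scope ring_scope.

Local Notation "x %:F" := (@FracField.tofrac _ x).

Section Subfield.
Variables (R : pzRingType) (K : R -> Prop).
Hypothesis subK : is_subfield K.

Lemma subfield1 : K 1. Proof. by case: subK. Qed.

Lemma subfieldB x y : K x -> K y -> K (x - y). Proof. by case: subK => _ + _ _; apply. Qed.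

Lemma subfieldM x y : K x -> K y -> K (x * y). Proof. by case: subK => _ _ + _; apply. Qed.

Lemma subfield0 : K 0. Proof. by rewrite -(subrr 1); apply: subfieldB; apply: subfield1. Qed.

Lemma subfieldN x : K x -> K (- x).
Proof. by move=> Kx; rewrite -sub0r; apply: subfieldB => //; apply: subfield0. Qed.

Lemma subfieldD x y : K x -> K y -> K (x + y).
Proof. by move=> Kx Ky; rewrite -[y]opprK; apply: subfieldB => //; apply: subfieldN. Qed.

Lemma subfieldX x n : K x -> K (x ^+ n).
Proof. by move=> Kx; elim: n => [|n IH]; [apply: subfield1 | rewrite exprS; apply: subfieldM]. Qed.

Lemma subfield_sum (I : Type) (r : seq I) (P : pred I) (F : I -> R) :
  (forall i, P i -> K (F i)) -> K (\sum_(i <- r | P i) F i).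
Proof. by move=> KF; apply: (big_ind K) => //; [apply: subfield0 | apply: subfieldD]. Qed.

End Subfield.

Section SubfieldOfField.
Variables (F : fieldType) (K : F -> Prop).
Hypothesis subK : is_subfield K.

Lemma subfieldV x : K x -> K x^-1.
Proof.
move=> Kx; have [->|x0] := eqVneq x 0; first by rewrite invr0; apply: subfield0.
case: subK => _ _ _ /(_ x Kx (elimN eqP x0)) [y Ky xy].
by rewrite -[x^-1]mulr1 -xy mulKf.
Qed.

Lemma subfield_horner (p : {poly F}) t : (forall i, K p`_i) -> K t -> K p.[t].
Proof.
move=> Kp Kt; rewrite horner_coef; apply: subfield_sum => // i _.
by apply: subfieldM => //; apply: subfieldX.
Qed.

End SubfieldOfField.

(** * Rational weights on torsion-free groups *)

Definition zcomb (V : zmodType) (n : nat) (v : nat -> V) (c : nat -> int) : V :=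
  \sum_(i < n) v i *~ c i.

Definition zdelta (a : nat) : nat -> int := fun i => (i == a)%:R.

Section IntegerCombinations.
Variables (V : zmodType) (n : nat) (v : nat -> V).

Lemma zcombS (c : nat -> int) :
  zcomb n.+1 v c = v 0%N *~ c 0%N + zcomb n (v \o succn) (c \o succn).
Proof. by rewrite /zcomb big_ord_recl. Qed.

Lemma zcombD (c1 c2 : nat -> int) :
  zcomb n v (fun i => c1 i + c2 i) = zcomb n v c1 + zcomb n v c2.
Proof. by rewrite /zcomb -big_split; apply: eq_bigr => i _; rewrite mulrzDr. Qed.

Lemma zcombN (c : nat -> int) : zcomb n v (fun i => - c i) = - zcomb n v c.
Proof. by rewrite /zcomb -sumrN; apply: eq_bigr => i _; rewrite mulrNz. Qed.

Lemma zcombZ (a : int) (c : nat -> int) : zcomb n v (fun i => a * c i) = zcomb n v c *~ a.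
Proof. by rewrite /zcomb mulrz_suml; apply: eq_bigr => i _; rewrite mulrC mulrzA. Qed.

Lemma zcomb_delta a : (a < n)%N -> zcomb n v (zdelta a) = v a.
Proof.
move=> an; rewrite /zcomb (bigD1 (Ordinal an)) //= /zdelta eqxx mulr1z big1 ?addr0 //.
by move=> i; rewrite -val_eqE /= => /negPf ->; rewrite mulr0z.
Qed.

End IntegerCombinations.

Lemma zcomb_eliminate (V : zmodType) (n : nat) (v : nat -> V) (m : nat) (d c : nat -> int) :
  v 0%N *+ m = zcomb n (v \o succn) d ->
  zcomb n.+1 v c *+ m =
    zcomb n (v \o succn) (fun i => c 0%N * d i + m%:Z * c i.+1).
Proof.
move=> vm; rewrite zcombS zcombD !zcombZ mulrnDl -vm; congr (_ + _).
by rewrite pmulrn mulrzAC -pmulrn.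
Qed.

Lemma exists_notin (R : realDomainType) (s : seq R) : exists q : R, q \notin s.
Proof.
suff [q q_gt] : exists q : R, forall u, u \in s -> u < q.
  by exists q; apply/negP => /q_gt; rewrite ltxx.
elim: s => [|v s [q q_gt]]; first by exists 0.
exists (Num.max q (v + 1)) => u; rewrite inE lt_max.
by case/orP => [/eqP ->|/q_gt ->]; rewrite ?orbT // ltrDl ltr01 orbT.
Qed.

Definition rat_weight_on (G : zmodType) (S : seq G) (phi : G -> rat) :=
  [/\ {in S &, injective phi},
      forall a b c d, a \in S -> b \in S -> c \in S -> d \in S ->
        a + b = c + d -> phi a + phi b = phi c + phi d &
      forall a b, a \in S -> b \in S -> a + b = 0 -> phi a + phi b = 0].

Lemma rat_weight_onN (G : zmodType) (S : seq G) phi :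
  rat_weight_on S phi -> rat_weight_on S (fun g => - phi g).
Proof.
case=> inj add4 add2; split=> [a b aS bS /oppr_inj|a b c d aS bS cS dS abcd|a b aS bS ab0].
- exact: inj.
- by rewrite -!opprD (add4 a b c d).
- by rewrite -opprD (add2 a b) ?oppr0.
Qed.

Section RationalWeights.
Variable G : zmodType.
Hypothesis tfG : torsion_free G.

Definition has_rat_weights (n : nat) (v : nat -> G) :=
  forall (I : finType) (Z : I -> nat -> int), (forall j, zcomb n v (Z j) != 0) ->
  exists w : nat -> rat,
    (forall c, zcomb n v c = 0 -> zcomb n w c = 0) /\ (forall j, zcomb n w (Z j) != 0).

Lemma has_rat_weights0 (v : nat -> G) : has_rat_weights 0 v.
Proof.
move=> I Z nzZ; exists (fun=> 0); split; first by move=> c _; rewrite /zcomb big_ord0.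
by move=> j; move: (nzZ j); rewrite /zcomb big_ord0 eqxx.
Qed.

Lemma has_rat_weights_dependent n (v : nat -> G) m d :
  (0 < m)%N -> v 0%N *+ m = zcomb n (v \o succn) d ->
  has_rat_weights n (v \o succn) -> has_rat_weights n.+1 v.
Proof.
move=> m_gt0 vm IH I Z nzZ.
pose elim_c c := fun i => c 0%N * d i + m%:Z * c i.+1.
have [j|w' [w'_rel w'_nz]] := IH I (fun j => elim_c (Z j)).
  by rewrite -(zcomb_eliminate _ vm); apply: contra (nzZ j) => /eqP /(tfG m_gt0) ->.
pose w i := if i is i'.+1 then w' i' else zcomb n w' d / m%:R.
have m_neq0 : m%:R != 0 :> rat by rewrite pnatr_eq0 -lt0n.
have wm : w 0%N *+ m = zcomb n (w \o succn) d by rewrite /= -mulr_natr divfK.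
exists w; split=> [c /(congr1 (fun g => g *+ m))|j].
  rewrite mul0rn (zcomb_eliminate _ vm) => /w'_rel.
  by rewrite -(zcomb_eliminate _ wm) => /eqP; rewrite mulrn_eq0 eqn0Ngt m_gt0 => /eqP.
by apply: contra (w'_nz j) => /eqP; rewrite -(zcomb_eliminate _ wm) => ->; rewrite mul0rn.
Qed.

Lemma has_rat_weights_independent n (v : nat -> G) :
  ~ (exists m d, (0 < m)%N /\ v 0%N *+ m = zcomb n (v \o succn) d) ->
  has_rat_weights n (v \o succn) -> has_rat_weights n.+1 v.
Proof.
move=> indep IH I Z nzZ.
have rel_head0 c : zcomb n.+1 v c = 0 -> c 0%N = 0.
  rewrite zcombS; case: (c 0%N) => [[|k]|k] // rel; case: indep.
    exists k.+1, (fun i => - c i.+1); split=> //.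
    by rewrite zcombN; apply/eqP; rewrite -addr_eq0; apply/eqP.
  exists k.+1, (c \o succn); split=> //; apply/eqP; rewrite eq_sym -subr_eq0.
  by move: rel; rewrite NegzE mulrNz addrC => /eqP.
pose J := {j : I | zcomb n (v \o succn) (Z j \o succn) != 0}.
have nzJ (j : J) : zcomb n (v \o succn) (Z (val j) \o succn) != 0 by case: j.
have [w' [w'_rel w'_nz]] := IH _ _ nzJ.
(* The only weight of [v_0] that makes [Z j] vanish (junk when [Z j 0 = 0]). *)
pose bad j := - zcomb n w' (Z j \o succn) / (Z j 0%N)%:~R.
have [q q_good] := exists_notin (codom bad).
pose w i := if i is i'.+1 then w' i' else q.
exists w; split=> [c rel|j].
  by move: (rel); rewrite !zcombS (rel_head0 c rel) !mulr0z !add0r => /w'_rel.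
rewrite zcombS /=; have [Zj0|Zj0] := eqVneq (Z j 0%N) 0.
  rewrite Zj0 mulr0z add0r; apply: (w'_nz (exist _ j _)).
  by have := nzZ j; rewrite zcombS Zj0 mulr0z add0r.
apply: contra q_good => /eqP sum0; apply/codomP; exists j.
have Zj0r : (Z j 0%N)%:~R != 0 :> rat by rewrite intr_eq0.
apply: (mulIf Zj0r); rewrite /bad divfK //.
by move: sum0; rewrite mulrzr => /eqP; rewrite addr_eq0 => /eqP.
Qed.

Lemma torsion_free_has_rat_weights n (v : nat -> G) : has_rat_weights n v.
Proof.
elim: n v => [|n IH] v; first exact: has_rat_weights0.
have [[m [d [m_gt0 vm]]]|indep] :=
  classic (exists m d, (0 < m)%N /\ v 0%N *+ m = zcomb n (v \o succn) d).
  exact: has_rat_weights_dependent vm (IH _).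
exact: has_rat_weights_independent indep (IH _).
Qed.

Lemma torsion_free_rat_weight (S : seq G) : exists phi, rat_weight_on S phi.
Proof.
pose n := size S; pose J := {p : 'I_n * 'I_n | S`_p.1 != S`_p.2}.
pose Z (p : J) i := zdelta (val p).1 i - zdelta (val p).2 i.
have nzZ p : zcomb n (nth 0 S) (Z p) != 0.
  by case: p => -[a b] /= Sab; rewrite /Z zcombD zcombN !zcomb_delta ?subr_eq0.
have [w [w_rel w_nz]] := torsion_free_has_rat_weights nzZ.
have idxS g : g \in S -> (index g S < n)%N by rewrite index_mem.
have nthS g : g \in S -> S`_(index g S) = g by exact: nth_index.
exists (fun g => w (index g S)); split.
- move=> a b aS bS /= wab; apply/eqP; apply: contraT => ab.
  have Sab : S`_(Ordinal (idxS a aS)) != S`_(Ordinal (idxS b bS)) by rewrite /= !nthS.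
  have := w_nz (exist _ (Ordinal (idxS a aS), Ordinal (idxS b bS)) Sab : J).
  by rewrite /Z zcombD zcombN !zcomb_delta ?idxS //= wab subrr eqxx.
- move=> a b c d aS bS cS dS abcd.
  have := w_rel (fun i => zdelta (index a S) i + zdelta (index b S) i
                          + - (zdelta (index c S) i + zdelta (index d S) i)).
  rewrite !zcombD !zcombN !zcombD !zcomb_delta ?idxS // !nthS // abcd subrr.
  by move=> /(_ erefl) /eqP; rewrite subr_eq0 => /eqP.
- move=> a b aS bS ab0.
  have := w_rel (fun i => zdelta (index a S) i + zdelta (index b S) i).
  by rewrite !zcombD !zcomb_delta ?idxS // !nthS // ab0 => /(_ erefl).
Qed.

End RationalWeights.

(** * Graded domains *)

Lemma big_pred1_uniq (R : nmodType) (I : eqType) (r : seq I) (a : I) (F : I -> R) :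
  uniq r -> a \in r -> \sum_(i <- r | i == a) F i = F a.
Proof. by move=> ur ar; rewrite -big_filter filter_pred1_uniq // big_seq1. Qed.

Lemma exists_seq_argmax d (R : orderType d) (T : eqType) (s : seq T) (phi : T -> R) :
  s != [::] ->
  exists2 x, x \in s & {in s, forall y, (phi y <= phi x)%O}.
Proof.
elim: s => [|a s IH] // _; have [->|/IH [x xs x_max]] := eqVneq s [::].
  by exists a; rewrite ?mem_head // => y; rewrite inE => /eqP ->.
have [ax|xa] := leP (phi a) (phi x).
  by exists x; rewrite ?inE ?xs ?orbT // => y; rewrite inE => /predU1P[->|/x_max].
exists a; rewrite ?mem_head // => y; rewrite inE => /predU1P[->//|/x_max yx].
exact: le_trans yx (ltW xa).
Qed.

Section GradedRing.
Variables (G : zmodType) (B : idomainType) (Bg : G -> B -> Prop).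
Hypothesis gradB : is_grading Bg.

Lemma homog0 g : Bg g 0.
Proof. by case: gradB => /(_ g) [? _]. Qed.

Lemma homogB g x y : Bg g x -> Bg g y -> Bg g (x - y).
Proof. by case: gradB => /(_ g) [_ homB] _ _ _; apply: homB. Qed.

Lemma homogN g x : Bg g x -> Bg g (- x).
Proof. by move=> homx; rewrite -sub0r; apply: homogB => //; apply: homog0. Qed.

Lemma homogD g x y : Bg g x -> Bg g y -> Bg g (x + y).
Proof. by move=> homx homy; rewrite -[y]opprK; apply: homogB => //; apply: homogN. Qed.

Lemma homogM g h x y : Bg g x -> Bg h y -> Bg (g + h) (x * y).
Proof. by case: gradB => _ + _ _; apply. Qed.

Lemma homog_sum g (I : Type) (r : seq I) (P : pred I) (F : I -> B) :
  (forall i, P i -> Bg g (F i)) -> Bg g (\sum_(i <- r | P i) F i).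
Proof. by move=> homF; apply: (big_ind (Bg g)) => //; [apply: homog0 | apply: homogD]. Qed.

Lemma homog_decomposition b : exists (s : seq G) (f : G -> B),
  [/\ uniq s, forall g, Bg g (f g) & b = \sum_(g <- s) f g].
Proof. by case: gradB => _ _ + _; apply. Qed.

Lemma homog_support b : exists (s : seq G) (f : G -> B),
  [/\ uniq s, forall g, Bg g (f g), {in s, forall g, f g != 0} & b = \sum_(g <- s) f g].
Proof.
have [s [f [us homf ->]]] := homog_decomposition b.
exists [seq g <- s | f g != 0], f; split=> //; first exact: filter_uniq.
- by move=> g; rewrite mem_filter => /andP[].
- by rewrite big_filter [RHS]big_mkcond; apply: eq_bigr => g _; case: eqVneq => [->|].
Qed.

Lemma homog_sum_eq0 (s : seq G) (f : G -> B) : uniq s -> (forall g, Bg g (f g)) ->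
  \sum_(g <- s) f g = 0 -> {in s, forall g, f g = 0}.
Proof. by move=> us homf s0; case: gradB => _ _ _ direct; apply: direct. Qed.

Lemma homog_part_eq0 (I : eqType) (r : seq I) (deg : I -> G) (X : I -> B) j e :
  (forall i, Bg (deg i) (X i)) -> Bg j (\sum_(i <- r) X i) -> e != j ->
  \sum_(i <- r | deg i == e) X i = 0.
Proof.
move=> homX homS ej; set x := \sum_(i <- r) X i.
pose E := undup (j :: map deg r); have uE : uniq E := undup_uniq _.
pose part k := \sum_(i <- r | deg i == k) X i - (if k == j then x else 0).
have hom_part k : Bg k (part k).
  apply: homogB; first by apply: homog_sum => i /eqP <-.
  by case: eqP => [->|_]; [exact: homS | exact: homog0].
have sum_parts : \sum_(k <- E) \sum_(i <- r | deg i == k) X i = x.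
  rewrite (exchange_big_dep predT) //=; apply: eq_big_seq => i ir.
  rewrite (eq_bigl (fun k => k == deg i)) => [|k]; last exact: eq_sym.
  by rewrite big_pred1_uniq // /E mem_undup inE map_f ?orbT.
have sum_part : \sum_(k <- E) part k = 0.
  by rewrite sumrB sum_parts -big_mkcond big_pred1_uniq ?mem_undup ?mem_head ?subrr.
have [eE|eE] := boolP (e \in E).
  by have := homog_sum_eq0 uE hom_part sum_part eE; rewrite /part (negPf ej) subr0.
rewrite big_seq_cond big1 // => i /andP[ir /eqP dege]; move: eE.
by rewrite -dege /E mem_undup inE map_f ?orbT.
Qed.

Lemma homog_component_eq0 (s : seq G) (f : G -> B) a j m g :
  uniq s -> (forall g, Bg g (f g)) -> Bg j a -> a != 0 ->
  Bg m (a * \sum_(k <- s) f k) -> g \in s -> j + g != m -> f g = 0.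
Proof.
move=> us homf homa a0 homS gs jgm.
rewrite mulr_sumr in homS; have := homog_part_eq0 (fun k => homogM homa (homf k)) homS jgm.
rewrite (eq_bigl (fun k => k == g)) => [|k]; last by rewrite (inj_eq (addrI j)).
by rewrite big_pred1_uniq // => /eqP; rewrite mulf_eq0 (negPf a0) => /eqP.
Qed.

Lemma homog1 : Bg 0 1.
Proof.
have [s [f [us homf E1]]] := homog_decomposition 1.
have /hasP[j js fj] : has (fun g => f g != 0) s.
  apply: contraT => /hasPn f0; move: (oner_neq0 B); rewrite E1 big_seq big1 ?eqxx //.
  by move=> g /f0 /negPn /eqP.
rewrite E1 big_seq; apply: homog_sum => g gs.
have [->|g0] := eqVneq g 0; first exact: homf.
rewrite (homog_component_eq0 (m := j) us homf (homf j) fj _ gs); first exact: homog0.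
  by rewrite -E1 mulr1; exact: homf.
by rewrite -[X in _ != X]addr0 (inj_eq (addrI j)).
Qed.

Lemma homogX g x n : Bg g x -> Bg (g *+ n) (x ^+ n).
Proof.
move=> homx; elim: n => [|n IH]; first by rewrite expr0 mulr0n; apply: homog1.
by rewrite exprS mulrS; apply: homogM.
Qed.

Lemma homog_nat n : Bg 0 n%:R.
Proof.
by elim: n => [|n IH]; [exact: homog0 | rewrite mulrS; apply: homogD => //; exact: homog1].
Qed.

Lemma homog_divr j m x y : Bg j x -> Bg m (x * y) -> x != 0 -> Bg (m - j) y.
Proof.
move=> homx homxy x0; have [s [f [us homf Ey]]] := homog_decomposition y.
rewrite Ey big_seq; apply: homog_sum => g gs.
have [<-|gm] := eqVneq (j + g) m; first by rewrite [j + g]addrC addrK.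
by rewrite (homog_component_eq0 us homf homx x0 _ gs gm) -?Ey //; exact: homog0.
Qed.

Lemma homog_addr_eq0 g h j x y : g != h -> g != j ->
  Bg g x -> Bg h y -> Bg j (x + y) -> x = 0.
Proof.
move=> gh gj homx homy homxy.
pose deg (b : bool) := if b then g else h; pose X (b : bool) := if b then x else y.
have homX b : Bg (deg b) (X b) by case: b.
have homS : Bg j (\sum_(b <- [:: true; false]) X b) by rewrite !big_cons big_nil addr0.
have hg : (h == g) = false by rewrite eq_sym (negPf gh).
by have := homog_part_eq0 homX homS gj; rewrite !big_cons big_nil /= eqxx hg addr0.
Qed.

Section UnitSupport.
Variables (S T : seq G) (f f' : G -> B).
Hypotheses (uS : uniq S) (uT : uniq T).
Hypotheses (homf : forall g, Bg g (f g)) (homf' : forall g, Bg g (f' g)).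
Hypotheses (nzf : {in S, forall g, f g != 0}) (nzf' : {in T, forall g, f' g != 0}).
Hypothesis unit_ff' : (\sum_(g <- S) f g) * (\sum_(g <- T) f' g) = 1.

Lemma unit_support_pair_degree s0 t0 : s0 \in S -> t0 \in T ->
  {in S & T, forall s t, s + t = s0 + t0 -> s = s0 /\ t = t0} -> s0 + t0 = 0.
Proof.
move=> s0S t0T uniq_st; apply/eqP; apply: contraT => st0.
pose I := [seq (a, b) | a <- S, b <- T].
have uI : uniq I by apply: allpairs_uniq => // -[? ?] [? ?] _ _ [-> ->].
have st0I : (s0, t0) \in I by apply: allpairs_f.
have homI : Bg 0 (\sum_(p <- I) f p.1 * f' p.2).
  suff -> : \sum_(p <- I) f p.1 * f' p.2 = 1 by exact: homog1.
  rewrite big_allpairs -unit_ff' mulr_suml; apply: eq_bigr => a _; by rewrite mulr_sumr.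
have := homog_part_eq0 (fun p => homogM (homf p.1) (homf' p.2)) homI st0.
rewrite big_seq_cond (eq_bigl (fun p => p == (s0, t0))) => [|[a b] /=].
  by rewrite big_pred1_uniq // => /eqP; rewrite mulf_eq0 (negPf (nzf s0S)) (negPf (nzf' t0T)).
apply/andP/eqP => [[/allpairsP[[a' b'] [aS bT [-> ->]]] /eqP /uniq_st[]// -> ->]|[-> ->]] //.
Qed.

Lemma unit_support_max psi : rat_weight_on (S ++ T) psi ->
  exists sM tM, [/\ sM \in S, tM \in T, psi sM + psi tM = 0,
    {in S, forall s, psi s <= psi sM} & {in T, forall t, psi t <= psi tM}].
Proof.
case=> psi_inj psi_add4 psi_add2.
have S0 : S != [::].
  by apply/eqP => S0; move/eqP: unit_ff'; rewrite S0 big_nil mul0r eq_sym oner_eq0.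
have T0 : T != [::].
  by apply/eqP => T0; move/eqP: unit_ff'; rewrite T0 big_nil mulr0 eq_sym oner_eq0.
have [sM sMS sM_max] := exists_seq_argmax psi S0.
have [tM tMT tM_max] := exists_seq_argmax psi T0.
have inS s : s \in S -> s \in S ++ T by rewrite mem_cat => ->.
have inT t : t \in T -> t \in S ++ T by rewrite mem_cat orbC => ->.
have sMtM : sM + tM = 0.
  apply: unit_support_pair_degree => // s t sS tT st.
  have := psi_add4 _ _ _ _ (inS _ sS) (inT _ tT) (inS _ sMS) (inT _ tMT) st.
  move: (sM_max s sS) (tM_max t tT) => ss tt e.
  have [eq_s eq_t] : psi s = psi sM /\ psi t = psi tM by split; lra.
  by split; apply: psi_inj => //; auto.
by exists sM, tM; split=> //; apply: psi_add2; auto.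
Qed.

(* For a rational weight, the top terms of [x] and [y] multiply to a nonzero
   element of degree 0, and so do the bottom terms; hence the top and bottom
   weights on [S] coincide. *)
Lemma unit_support_homog : torsion_free G -> exists g0, {in S, forall s, s = g0}.
Proof.
move=> tfG; have [phi phiW] := torsion_free_rat_weight tfG (S ++ T).
have [sM [tM [sMS _ sMtM sM_max tM_max]]] := unit_support_max phiW.
have [sm [tm [_ tmT smtm sm_min _]]] := unit_support_max (rat_weight_onN phiW).
exists sM => s sS; case: phiW => phi_inj _ _; apply: phi_inj; rewrite ?mem_cat ?sS ?sMS //.
move: (sM_max s sS) (sm_min s sS) (tM_max tm tmT) => /=; lra.
Qed.

End UnitSupport.

Lemma unit_homog x y : torsion_free G -> x * y = 1 -> exists g, Bg g x.
Proof.
move=> tfG xy; have [S [f [uS homf nzf Ex]]] := homog_support x.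
have [T [f' [uT homf' nzf' Ey]]] := homog_support y.
have [|g0 Sg0] := unit_support_homog uS uT homf homf' nzf nzf' _ tfG; first by rewrite -Ex -Ey.
by exists g0; rewrite Ex big_seq; apply: homog_sum => g /Sg0 <-.
Qed.

(* [x] and [x + 1] are homogeneous units; if [x] had a nonzero degree,
   [x + 1] would have two nonzero components. *)
Lemma torsion_free_subfield_homog0 (k : B -> Prop) x :
  torsion_free G -> is_subfield k -> k x -> Bg 0 x.
Proof.
move=> tfG subk kx; have [->|x0] := eqVneq x 0; first exact: homog0.
have unit_homog_k z : k z -> exists g, Bg g z.
  move=> kz; have [->|z0] := eqVneq z 0; first by exists 0; exact: homog0.
  by case: subk => _ _ _ /(_ z kz (elimN eqP z0)) [w _ /(unit_homog tfG)].
have [g homx] := unit_homog_k x kx.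
have [j homx1] := unit_homog_k (x + 1) (subfieldD subk kx (subfield1 subk)).
have [<-//|g0] := eqVneq g 0.
have [jg|jg] := eqVneq j g.
  have hom1x : Bg j (1 + x) by rewrite addrC.
  have g0' : 0 != g by rewrite eq_sym.
  have j0 : 0 != j by rewrite jg.
  by move/eqP: (homog_addr_eq0 g0' j0 homog1 homx hom1x); rewrite oner_eq0.
by move: x0; rewrite eq_sym in jg; rewrite (homog_addr_eq0 g0 jg homx homog1 homx1) eqxx.
Qed.

Lemma subfieldI_homog0 (k : B -> Prop) :
  is_subfield k -> is_subfield (fun x => k x /\ Bg 0 x).
Proof.
move=> subk; split.
- by split; [exact: subfield1 | exact: homog1].
- by move=> x y [kx homx] [ky homy]; split; [apply: subfieldB | apply: homogB].
- move=> x y [kx homx] [ky homy]; split; first exact: subfieldM.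
  by rewrite -[0]addr0; apply: homogM.
move=> x [kx homx] x0; case: (subk) => _ _ _ /(_ x kx x0) [y ky xy].
exists y => //; split=> //; rewrite -[0](subrr 0); apply: homog_divr homx _ (introN eqP x0).
by rewrite xy; exact: homog1.
Qed.

Lemma HFrac_subfield (P : B -> Prop) : P 1 -> (forall x y, P x -> P y -> P (x - y)) ->
  (forall x y, P x -> P y -> P (x * y)) -> is_subfield (HFrac Bg P).
Proof.
move=> P1 PB PM; split.
- exists 0, 1, 1; split=> //; try exact: homog1; first exact/eqP/oner_neq0.
  by rewrite tofrac1 divr1.
- move=> _ _ [i [b [s [[Pb Ps] homb homs s0 ->]]]] [i' [b' [s' [[Pb' Ps'] homb' homs' s0' ->]]]].
  exists (i + i'), (b * s' - b' * s), (s * s'); split; last 1 first.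
  + rewrite tofracB !tofracM -mulNr addf_div ?mulNr // tofrac_eq0; exact/eqP.
  + by split; [apply: PB; apply: PM | apply: PM].
  + by apply: homogB; [|rewrite addrC]; apply: homogM.
  + exact: homogM.
  + by apply/eqP; rewrite mulf_neq0 //; apply/eqP.
- move=> _ _ [i [b [s [[Pb Ps] homb homs s0 ->]]]] [i' [b' [s' [[Pb' Ps'] homb' homs' s0' ->]]]].
  exists (i + i'), (b * b'), (s * s'); split; try exact: homogM.
  + by split; apply: PM.
  + by apply/eqP; rewrite mulf_neq0 //; apply/eqP.
  + by rewrite !tofracM mulf_div.
- move=> _ [i [b [s [[Pb Ps] homb homs s0 ->]]]] bs0.
  have b0 : b != 0 by apply: contra_not_neq bs0 => ->; rewrite tofrac0 mul0r.
  have sF0 : s%:F != 0 by rewrite tofrac_eq0; apply/eqP.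
  exists (s%:F / b%:F); first by exists i, s, b; split=> //; apply/eqP.
  by rewrite mulf_div [s%:F * _]mulrC divff // mulf_neq0 // tofrac_eq0.
Qed.

Lemma HFrac_subfieldT : is_subfield (HFrac Bg (fun _ => True)).
Proof. exact: HFrac_subfield. Qed.

End GradedRing.

(** * Derivations and local slices *)

Section Derivation.
Variables (B : comPzRingType) (D : B -> B).
Hypothesis derD : is_derivation D.

Lemma derivationD x y : D (x + y) = D x + D y. Proof. by case: derD. Qed.

Lemma derivationM x y : D (x * y) = D x * y + x * D y. Proof. by case: derD. Qed.

Lemma derivation0 : D 0 = 0.
Proof. by apply: (@addrI _ (D 0)); rewrite -derivationD !addr0. Qed.

Lemma derivationB x y : D (x - y) = D x - D y.
Proof. by apply: (addIr (D y)); rewrite -derivationD !subrK. Qed.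

Lemma derivation_sum (I : Type) (r : seq I) (P : pred I) (F : I -> B) :
  D (\sum_(i <- r | P i) F i) = \sum_(i <- r | P i) D (F i).
Proof. exact: (big_morph D derivationD derivation0). Qed.

Lemma derivation1 : D 1 = 0.
Proof.
have := derivationM 1 1; rewrite !mul1r mulr1 => /eqP.
by rewrite -{1}[D 1]addr0 (inj_eq (addrI _)) => /eqP <-.
Qed.

Lemma derivation_nat n : D n%:R = 0.
Proof.
by elim: n => [|n IH]; [exact: derivation0 | rewrite mulrS derivationD derivation1 IH addr0].
Qed.

Lemma derivationMl c x : D c = 0 -> D (c * x) = c * D x.
Proof. by move=> Dc; rewrite derivationM Dc mul0r add0r. Qed.

Lemma ker_derivationM x y : D x = 0 -> D y = 0 -> D (x * y) = 0.
Proof. by move=> Dx Dy; rewrite derivationMl // Dy mulr0. Qed.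

Lemma ker_derivationX x n : D x = 0 -> D (x ^+ n) = 0.
Proof.
by move=> Dx; elim: n => [|n IH]; [exact: derivation1 | rewrite exprS ker_derivationM].
Qed.

Lemma derivationXS r n : D (r ^+ n.+1) = n.+1%:R * D r * r ^+ n.
Proof.
elim: n => [|n IH]; first by rewrite expr1 expr0 mulr1 mul1r.
by rewrite exprSr derivationM IH [r ^+ n.+1]exprSr; ring.
Qed.

Lemma iter_derivation0 n : iter n D 0 = 0.
Proof. by elim: n => //= n ->; rewrite derivation0. Qed.

Lemma iter_derivationB n x y : iter n D (x - y) = iter n D x - iter n D y.
Proof. by elim: n => //= n ->; rewrite derivationB. Qed.

Lemma iter_derivation_sum n (I : Type) (r : seq I) (P : pred I) (F : I -> B) :
  iter n D (\sum_(i <- r | P i) F i) = \sum_(i <- r | P i) iter n D (F i).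
Proof. by elim: n => //= n ->; rewrite derivation_sum. Qed.

Lemma iter_derivationMl n c x : D c = 0 -> iter n D (c * x) = c * iter n D x.
Proof. by move=> Dc; elim: n => //= n ->; rewrite derivationMl. Qed.

Section Slice.
Variable r : B.
Hypothesis Dr2 : D (D r) = 0.

Lemma iter_derivationXnn n : iter n D (r ^+ n) = n`!%:R * D r ^+ n.
Proof.
elim: n => [|n IH]; first by rewrite /= expr0 mulr1.
rewrite iterSr derivationXS -mulrA iter_derivationMl ?derivation_nat //.
by rewrite iter_derivationMl // IH factS natrM exprS; ring.
Qed.

Lemma iter_derivationX_lt k m : (k < m)%N -> iter m D (r ^+ k) = 0.
Proof.
move=> /subnKC <-; rewrite addnC iterD iterS iter_derivationXnn.
by rewrite ker_derivationM ?derivation_nat ?ker_derivationX // iter_derivation0.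
Qed.

End Slice.

Lemma iter_derivation_slice y n : D y != 0 -> iter n D y = 0 ->
  exists k, D (iter k D y) != 0 /\ D (D (iter k D y)) = 0.
Proof.
elim: n y => [|n IH] y Dy Dny.
  by move: Dy; rewrite /= in Dny; rewrite Dny derivation0 eqxx.
have [DDy|DDy] := eqVneq (D (D y)) 0; first by exists 0%N.
by have [k] := IH (D y) DDy (etrans (esym (iterSr n D y)) Dny); exists k.+1; rewrite iterSr.
Qed.

End Derivation.

Lemma pchar0_natf_neq0 (R : idomainType) n :
  [pchar R] =i pred0 -> (0 < n)%N -> n%:R != 0 :> R.
Proof. by move=> /(pcharf0P R) ->; rewrite -lt0n. Qed.

Section SliceTranscendental.
Variables (B : idomainType) (D : B -> B) (r : B).
Hypotheses (derD : is_derivation D) (charB : [pchar B] =i pred0).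
Hypotheses (Dr0 : D r != 0) (Dr2 : D (D r) = 0).

(* Apply [D ^ n] with [n = deg P]: only the leading term survives. *)
Lemma slice_transcendental (P : {poly B}) : (forall i, D P`_i = 0) -> P.[r] = 0 -> P = 0.
Proof.
move=> DP Pr0; apply/eqP; apply: contraT => P0.
have sP : (0 < size P)%N by rewrite size_poly_gt0.
have := congr1 (iter (size P).-1 D) Pr0.
rewrite horner_coef (iter_derivation_sum derD) (iter_derivation0 derD) -(prednK sP).
rewrite big_ord_recr big1 /= => [|k _]; last first.
  by rewrite (iter_derivationMl derD) // (iter_derivationX_lt derD) ?mulr0.
rewrite add0r (iter_derivationMl derD) // (iter_derivationXnn derD) // => /eqP.
rewrite !mulf_eq0 expf_eq0 (negPf Dr0) andbF orbF.
rewrite (negPf (pchar0_natf_neq0 charB (fact_gt0 _))) orbF.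
by rewrite -lead_coefE lead_coef_eq0 (negPf P0).
Qed.

End SliceTranscendental.

(** * Homogeneous locally nilpotent derivations *)

Lemma gen_subgroup_diff (G : zmodType) (S : G -> Prop) g :
  S 0 -> (forall a b, S a -> S b -> S (a + b)) -> gen_subgroup S g ->
  exists a b, [/\ S a, S b & g = a - b].
Proof.
move=> S0 SD /(_ (fun g => exists a b, [/\ S a, S b & g = a - b])); apply.
- by exists 0, 0; rewrite subr0.
- move=> _ _ [a [b [Sa Sb ->]]] [a' [b' [Sa' Sb' ->]]].
  exists (a + b'), (b + a'); split; [exact: SD | exact: SD |].
  by rewrite opprB opprD addrACA addrC.
- by move=> a Sa; exists a, 0; rewrite subr0.
Qed.

Lemma HFrac_sub (G : zmodType) (B : idomainType) (Bg : G -> B -> Prop)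
    (P Q : B -> Prop) x :
  (forall b, P b -> Q b) -> HFrac Bg P x -> HFrac Bg Q x.
Proof.
move=> PQ [i [b [s [[Pb Ps] homb homs s0 ->]]]].
by exists i, b, s; split=> //; split; apply: PQ.
Qed.

Lemma HFrac_common_denominator (G : zmodType) (B : idomainType) (Bg : G -> B -> Prop)
    (P : B -> Prop) (f : nat -> {fraction B}) n :
  P 1 -> (forall x y, P x -> P y -> P (x * y)) -> (forall k, HFrac Bg P (f k)) ->
  exists c (q : nat -> B),
    [/\ P c, c != 0, forall k, P (q k) & forall k, (k < n)%N -> c%:F * f k = (q k)%:F].
Proof.
move=> P1 PM Pf; elim: n => [|n [c [q [Pc c0 Pq cq]]]].
  by exists 1, (fun=> 1); split; rewrite ?oner_neq0.
have [_ [b [s [[Pb Ps] _ _ /eqP s0 fn]]]] := Pf n.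
exists (c * s), (fun k => if (k < n)%N then q k * s else c * b); split.
- exact: PM.
- exact: mulf_neq0.
- by move=> k; case: ifP => _; apply: PM.
move=> k; rewrite ltnS leq_eqVlt => /predU1P[->|kn]; last by rewrite kn !tofracM -cq // mulrAC.
by rewrite ltnn fn !tofracM -mulrA [s%:F * _]mulrC divfK // tofrac_eq0.
Qed.

Lemma mulr_exprB_div (F : fieldType) (a x : F) n k : (k <= n)%N -> a != 0 ->
  a ^+ n * (x / a) ^+ k = a ^+ (n - k) * x ^+ k.
Proof.
move=> kn a0; rewrite expr_div_n -{1}(subnK kn) exprD -mulrA; congr (_ * _).
by rewrite mulrCA mulfV ?mulr1 // expf_neq0.
Qed.

Lemma mulr_div_exprn (F : fieldType) (x v a b w r : F) k : a != 0 -> b != 0 -> w != 0 ->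
  x * v * a ^+ k / (w * b ^+ k) * (r * b / a) ^+ k = x * r ^+ k * (v / w).
Proof.
move=> a0 b0 w0; rewrite expr_div_n !exprMn.
by field; rewrite w0 !expf_neq0.
Qed.

Lemma mulr_div_mulKl (F : fieldType) (c y u v : F) : c != 0 ->
  c * y * (u / (c * v)) = y * u / v.
Proof.
move=> c0; have [->|v0] := eqVneq v 0; first by rewrite !mulr0 !invr0 !mulr0.
by field; rewrite c0 v0.
Qed.

Lemma divr_mulr_div (F : fieldType) (b s u v : F) : u != 0 -> v != 0 ->
  b / s = (b * u / v) / (s * u / v).
Proof.
move=> u0 v0; have [->|s0] := eqVneq s 0; first by rewrite !mul0r !invr0 !mulr0.
by field; rewrite s0 u0 v0.
Qed.

Section GradedLND.
Variables (G : zmodType) (B : idomainType) (Bg : G -> B -> Prop) (D : B -> B) (h : G).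
Hypotheses (gradB : is_grading Bg) (derD : is_derivation D) (lndD : locally_nilpotent D).
Hypothesis homD : forall g b, Bg g b -> Bg (g + h) (D b).
Hypothesis charB : [pchar B] =i pred0.

Local Notation kerD := (fun b : B => D b = 0).

Lemma homog_iter n g x : Bg g x -> Bg (g + h *+ n) (iter n D x).
Proof.
move=> homx; elim: n => [|n IH] /=; first by rewrite addr0.
by rewrite mulrSr addrA; apply: homD.
Qed.

Lemma lnd_homog_slice : (exists b, D b <> 0) ->
  exists r d, [/\ Bg d r, D r != 0 & D (D r) = 0].
Proof.
case=> b Db; have [s [f [_ homf Eb]]] := homog_decomposition gradB b.
have /hasP[j _ Dfj] : has (fun g => D (f g) != 0) s.
  apply/negPn/negP => /hasPn Df0; apply: Db; rewrite Eb (derivation_sum derD) big_seq big1 //.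
  by move=> g /Df0 /negPn /eqP.
have [n Dn] := lndD (f j).
have [k [Dk0 Dk2]] := iter_derivation_slice derD Dfj Dn.
by exists (iter k D (f j)), (j + h *+ k); split=> //; apply: homog_iter.
Qed.

Lemma HFrac_ker_subfield : is_subfield (HFrac Bg kerD).
Proof.
apply: HFrac_subfield => //; first exact: derivation1.
  by move=> x y Dx Dy; rewrite (derivationB derD) Dx Dy subrr.
exact: ker_derivationM.
Qed.

Hypothesis HGA : forall g, degree_group Bg kerD g <-> degree_group Bg (fun _ => True) g.

Lemma ker_degree_split g x : Bg g x -> x != 0 -> exists j u1 u2,
  [/\ D u1 = 0, D u2 = 0, u1 != 0 & u2 != 0] /\ (Bg (g + j) u1 /\ Bg j u2).
Proof.
move=> homx x0; pose S g := exists b, [/\ D b = 0, Bg g b & b <> 0].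
have Sg : gen_subgroup S g by apply/HGA => H _ _; apply; exists x; split=> //; apply/eqP.
have S0 : S 0.
  by exists 1; split; [exact: derivation1 | exact: homog1 | exact/eqP/oner_neq0].
have SD a b : S a -> S b -> S (a + b).
  move=> [u [Du homu /eqP u0]] [v [Dv homv /eqP v0]]; exists (u * v); split.
  - exact: ker_derivationM.
  - exact: homogM.
  - by apply/eqP; rewrite mulf_neq0.
have [a [b [[u1 [Du1 homu1 u10]] [u2 [Du2 homu2 u20]] gab]]] := gen_subgroup_diff S0 SD Sg.
by exists b, u1, u2; rewrite gab subrK; split; split=> //; apply/eqP.
Qed.

Section Slice.
Variables (r : B) (d : G).
Hypotheses (homr : Bg d r) (Dr0 : D r != 0) (Dr2 : D (D r) = 0).

(* If [D^(m+1) x = 0], then [D^m] kills [m! (D r)^m x - D^m x * r^m]. *)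
Lemma slice_expansion m g x : Bg g x -> iter m D x = 0 ->
  exists c e (P : {poly B}), [/\ D c = 0, c != 0, Bg e c,
    forall k, D P`_k = 0 /\ Bg (e + g - d *+ k) P`_k & c * x = P.[r]].
Proof.
elim: m g x => [|m IH] g x homx /= Dmx.
  exists 1, 0, 0; split; rewrite ?(derivation1 derD) ?oner_neq0 ?Dmx ?mulr0 ?horner0 //.
    exact: homog1.
  by move=> k; rewrite coef0 (derivation0 derD); split=> //; apply: homog0.
set y := iter m D x; set a := m`!%:R * D r ^+ m.
have Da : D a = 0.
  by rewrite (ker_derivationM derD) ?(derivation_nat derD) ?(ker_derivationX derD).
have a0 : a != 0 by rewrite mulf_neq0 ?expf_neq0 ?pchar0_natf_neq0 ?fact_gt0.
have homa : Bg ((d + h) *+ m) a.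
  rewrite -[_ *+ m]add0r; apply: homogM => //; first exact: homog_nat.
  by apply: homogX => //; apply: homD.
have homx' : Bg (g + (d + h) *+ m) (a * x - y * r ^+ m).
  apply: homogB => //; first by rewrite addrC; apply: homogM.
  rewrite mulrnDl [g + _]addrCA addrC; apply: homogM => //; last exact: homogX.
  exact: homog_iter.
have Dmx' : iter m D (a * x - y * r ^+ m) = 0.
  rewrite (iter_derivationB derD) !(iter_derivationMl derD) //.
  by rewrite (iter_derivationXnn derD) // -/y mulrC subrr.
have [c [e [P [Dc c0 homc homP cx']]]] := IH _ _ homx' Dmx'.
exists (c * a), (e + (d + h) *+ m), (P + (c * y) *: 'X^m); split.
- exact: (ker_derivationM derD).
- exact: mulf_neq0.
- exact: homogM.
- move=> k; rewrite coefD coefZ coefXn; have [Dk homk] := homP k.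
  have -> : e + (d + h) *+ m + g - d *+ k = e + (g + (d + h) *+ m) - d *+ k.
    by rewrite [g + _]addrC addrA.
  case: eqP => [km|_]; last by rewrite mulr0 addr0.
  subst k; rewrite mulr1 (derivationD derD) Dk (ker_derivationM derD) ?addr0 //; split=> //.
  apply: homogD => //; rewrite mulrnDl [g + (_ + _)]addrCA [d *+ m + _]addrC addrA addrK.
  by apply: homogM => //; apply: homog_iter.
- by rewrite hornerD hornerZ hornerXn -cx' -!mulrA -mulrDr subrK.
Qed.

Lemma homog_unit_ker gx gy x y : Bg gx x -> Bg gy y -> x * y = 1 -> D x = 0.
Proof.
move=> homx homy xy; have [m1 Dx] := lndD x; have [m2 Dy] := lndD y.
have [c1 [e1 [P [Dc1 c10 _ homP Ex]]]] := slice_expansion homx Dx.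
have [c2 [e2 [Q [Dc2 c20 _ homQ Ey]]]] := slice_expansion homy Dy.
have PQ : P * Q = (c1 * c2)%:P.
  apply/eqP; rewrite -subr_eq0; apply/eqP.
  apply: (slice_transcendental derD charB Dr0 Dr2) => [i|].
    rewrite coefB coefC coefM (derivationB derD) (derivation_sum derD) big1 => [|j _].
      by case: eqP; rewrite ?(ker_derivationM derD) ?(derivation0 derD) ?subrr.
    by rewrite (ker_derivationM derD) //; [case: (homP j) | case: (homQ (i - j)%N)].
  by rewrite hornerD hornerN hornerM hornerC -Ex -Ey mulrACA xy mulr1 subrr.
have c12 : c1 * c2 != 0 by rewrite mulf_neq0.
have [P0 Q0] : P != 0 /\ Q != 0.
  by split; apply: contra_neq c12 => PQ0; apply/eqP; rewrite -polyC_eq0 -PQ PQ0 ?mul0r ?mulr0.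
have sizeP : size P = 1%N.
  have := size_mul P0 Q0; rewrite PQ size_polyC c12.
  have := size_poly_gt0 P; have := size_poly_gt0 Q; rewrite P0 Q0; lia.
have := congr1 D Ex; rewrite (derivationMl derD) // [P]size1_polyC ?sizeP // hornerC.
by case: (homP 0%N) => -> _ /eqP; rewrite mulf_eq0 (negPf c10) => /eqP.
Qed.

Section SliceRatio.
Variables (a1 a2 : B) (i2 : G).
Hypotheses (Da1 : D a1 = 0) (Da2 : D a2 = 0) (a10 : a1 != 0) (a20 : a2 != 0).
Hypotheses (homa1 : Bg (d + i2) a1) (homa2 : Bg i2 a2).

(* [r a2] and [a1] both have degree [d + i2], so [t] has degree 0. *)
Let t := (r * a2)%:F / a1%:F.

Lemma slice_ratio_transcendental (p : {poly {fraction B}}) :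
  (forall i, HFrac Bg kerD p`_i) -> p != 0 -> p.[t] != 0.
Proof.
move=> Kp /eqP p0; apply/eqP => pt0; apply: p0; set n := size p.
have [c [q [Dc c0 Dq cq]]] :=
  HFrac_common_denominator n (derivation1 derD) (ker_derivationM derD) Kp.
pose Q := \poly_(k < n) (q k * a1 ^+ (n - k) * a2 ^+ k).
have QE : (Q.[r])%:F = c%:F * a1%:F ^+ n * p.[t].
  rewrite horner_poly rmorph_sum horner_coef mulr_sumr; apply: eq_bigr => -[k /= kn] _.
  have a1F : a1%:F != 0 by rewrite tofrac_eq0.
  rewrite [RHS]mulrACA cq // (mulr_exprB_div _ (ltnW kn) a1F) !rmorphM !rmorphXn /= exprMn.
  by rewrite [RHS]mulrA [RHS]mulrA [in RHS]mulrAC.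
have Q0 : Q = 0.
  apply: (slice_transcendental derD charB Dr0 Dr2) => [k|].
    rewrite coef_poly; case: ifP => _; last exact: derivation0.
    by rewrite !(ker_derivationM derD) ?(ker_derivationX derD).
  by apply/eqP; rewrite -tofrac_eq0 QE pt0 mulr0.
apply/polyP => k; rewrite coef0; have [kn|/leq_sizeP -> //] := ltnP k n.
have /eqP := congr1 (fun P : {poly B} => P`_k) Q0; rewrite coef_poly kn coef0.
rewrite !mulf_eq0 !expf_eq0 (negPf a10) (negPf a20) !andbF !orbF => /eqP qk0.
by have /eqP := cq k kn; rewrite qk0 tofrac0 mulf_eq0 tofrac_eq0 (negPf c0) => /eqP.
Qed.

Lemma slice_ratio_horner i j y u1 u2 : D u1 = 0 -> D u2 = 0 -> u1 != 0 ->
  Bg (i + j) u1 -> Bg j u2 -> Bg i y ->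
  exists q : {poly {fraction B}},
    (forall k, HFrac Bg kerD q`_k) /\ q.[t] = (y * u2)%:F / u1%:F.
Proof.
move=> Du1 Du2 u10 homu1 homu2 homy; have [m Dmy] := lndD y.
have [c [e [P [Dc c0 homc homP cy]]]] := slice_expansion homy Dmy.
have cu10 : (c * u1)%:F != 0 by rewrite tofrac_eq0 mulf_neq0.
have [a1F a2F] : a1%:F != 0 /\ a2%:F != 0 by rewrite !tofrac_eq0.
exists (\poly_(k < size P) ((P`_k * u2 * a1 ^+ k)%:F / (c * u1 * a2 ^+ k)%:F)); split.
  move=> k; rewrite coef_poly; case: ifP => _; last exact: (subfield0 HFrac_ker_subfield).
  have [DPk homPk] := homP k.
  exists (e + (i + j) + i2 *+ k), (P`_k * u2 * a1 ^+ k), (c * u1 * a2 ^+ k); split=> //.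
  - by split; rewrite !(ker_derivationM derD) ?(ker_derivationX derD).
  - have -> : e + (i + j) + i2 *+ k = e + i - d *+ k + j + (d + i2) *+ k.
      by rewrite mulrnDl [RHS]addrA [_ + j + d *+ k]addrAC addrNK addrA.
    by apply: homogM => //; [apply: homogM | apply: homogX].
  - by apply: homogM => //; [apply: homogM | apply: homogX].
  - by apply/eqP; rewrite !mulf_neq0 ?expf_neq0.
have cu1F : c%:F * u1%:F != 0 by rewrite -rmorphM.
rewrite horner_poly (eq_bigr (fun k : 'I_(size P) => (P`_k * r ^+ k)%:F * (u2%:F / (c * u1)%:F))).
  rewrite -mulr_suml -rmorph_sum -horner_coef -cy !rmorphM /=.
  by rewrite mulr_div_mulKl // tofrac_eq0.
move=> k _; rewrite /t !rmorphM !rmorphXn /=.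
exact: mulr_div_exprn.
Qed.

Lemma HFrac_slice_ratio x : HFrac Bg (fun _ => True) x <->
  exists p q : {poly {fraction B}}, [/\ forall i, HFrac Bg kerD p`_i,
    forall i, HFrac Bg kerD q`_i, q.[t] != 0 & x = p.[t] / q.[t]].
Proof.
split=> [[i [b [s [_ homb homs /eqP s0 ->]]]]|[p [q [Kp Kq qt0 ->]]]].
  have [j [u1 [u2 [[Du1 Du2 u10 u20] [homu1 homu2]]]]] := ker_degree_split homs s0.
  have [p [Kp pt]] := slice_ratio_horner Du1 Du2 u10 homu1 homu2 homb.
  have [q [Kq qt]] := slice_ratio_horner Du1 Du2 u10 homu1 homu2 homs.
  exists p, q; split=> //; first by rewrite qt mulf_neq0 ?invr_neq0 // tofrac_eq0 ?mulf_neq0.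
  by rewrite pt qt !rmorphM /= -divr_mulr_div // tofrac_eq0.
have subL := HFrac_subfieldT gradB.
have Lp i : HFrac Bg (fun _ => True) p`_i by apply: HFrac_sub (Kp i).
have Lq i : HFrac Bg (fun _ => True) q`_i by apply: HFrac_sub (Kq i).
have Lt : HFrac Bg (fun _ => True) t.
  by exists (d + i2), (r * a2), a1; split=> //; [exact: homogM | exact/eqP].
have Lpt := subfield_horner subL Lp Lt; have Lqt := subfield_horner subL Lq Lt.
by apply: (subfieldM subL) => //; apply: (subfieldV subL).
Qed.

End SliceRatio.

Lemma HFrac_ker_pure_trdeg1 : pure_trdeg1 (HFrac Bg kerD) (HFrac Bg (fun _ => True)).
Proof.
have r0 : r != 0 by apply: contraNneq Dr0 => ->; rewrite (derivation0 derD).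
have [i2 [a1 [a2 [[Da1 Da2 a10 a20] [homa1 homa2]]]]] := ker_degree_split homr r0.
split; [exact: HFrac_ker_subfield | exact: HFrac_subfieldT | by move=> x; apply: HFrac_sub |].
exists ((r * a2)%:F / a1%:F); split.
- by exists (d + i2), (r * a2), a1; split=> //; [exact: homogM | exact/eqP].
- exact: slice_ratio_transcendental Da1 Da2 a10 a20.
- exact: HFrac_slice_ratio Da1 Da2 a10 a20 homa1 homa2.
Qed.

Lemma subfield_homog0_HFrac_ker (k : B -> Prop) x :
  is_subfield k -> k x -> Bg 0 x -> HFrac Bg kerD x%:F.
Proof.
move=> subk kx homx.
have Dx : D x = 0.
  have [->|x0] := eqVneq x 0; first exact: derivation0.
  case: (subk) => _ _ _ /(_ x kx (elimN eqP x0)) [y _ xy].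
  have homy : Bg (0 - 0) y by apply: (homog_divr gradB homx _ x0); rewrite xy; exact: homog1.
  exact: homog_unit_ker homx homy xy.
exists 0, x, 1; split=> //; try exact: homog1; first by split=> //; exact: derivation1.
  exact/eqP/oner_neq0.
by rewrite tofrac1 divr1.
Qed.

End Slice.

End GradedLND.

Theorem theorem3p6 (G : zmodType) (B : idomainType) (Bg : G -> B -> Prop)
    (D : B -> B) :
  is_grading Bg ->
  [pchar B] =i pred0 ->
  is_HLND Bg D ->
  (exists b, D b <> 0) ->
  (forall g, degree_group Bg (fun b => D b = 0) g <-> degree_group Bg (fun _ => True) g) ->
  let A := fun b : B => D b = 0 in
  [/\ (* (a) *)
      pure_trdeg1 (HFrac Bg A) (HFrac Bg (fun _ => True)),
      (* (b) *)
      (forall k : B -> Prop, is_subfield k ->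
         is_subfield (fun x => k x /\ Bg 0 x) /\
         (forall x, k x -> Bg 0 x -> HFrac Bg A (FracField.tofrac x))) &
      (* (c) *)
      (torsion_free G -> forall k : B -> Prop, is_subfield k ->
         (forall x, k x -> HFrac Bg A (FracField.tofrac x)) /\
         ruled (fun y => exists2 x, k x & y = FracField.tofrac x)
               (HFrac Bg (fun _ => True)))].
Proof.
move=> gradB charB [derD lndD [h homD]] D_neq0 HGA A; rewrite {}/A.
have [r [d [homr Dr0 Dr2]]] := lnd_homog_slice gradB derD lndD homD D_neq0.
have trdeg1 := HFrac_ker_pure_trdeg1 gradB derD lndD homD charB HGA homr Dr0 Dr2.
have HFrac_ker := subfield_homog0_HFrac_ker gradB derD lndD homD charB homr Dr0 Dr2.
split=> // [k subk|tfG k subk].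
  by split=> [|x]; [exact: subfieldI_homog0 | exact: HFrac_ker subk].
have kK x : k x -> HFrac Bg (fun b => D b = 0) x%:F.
  move=> kx; apply: (HFrac_ker _ _ subk kx).
  exact: (torsion_free_subfield_homog0 gradB tfG subk kx).
split=> //; exists (HFrac Bg (fun b => D b = 0)); split=> [_ [x kx ->]|x|] //.
  exact: kK.
exact: HFrac_sub.
Qed.
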